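(* Suppose $p_{\max}\cdot d_{\max}<1$. Then there exist constants $R,\rho>0$ (depending only on $p_{\max}$ and $d_{\max}$) such that for any $L>0$, for every round $t$ of the adaptive seeding process (under any seeding rule and any prior history), the probability that the number of nodes newly activated in round $t$ exceeds $L$ is at most $Re^{-\rho L}$.
   Context: Setting: adaptive seeding on a finite directed graph $\mathcal G=(\mathcal V,\mathcal E)$ with influence probabilities $\bar w(e)$, one seed per round, each round's diffusion following the independent cascade model on the current graph (where arcs into nodes that have acted as non-seed activated nodes, i.e. intermediaries, in earlier rounds have been removed; independent-cascade coin flips are independent across arcs and rounds). $p_{\max}=\max_{e\in\mathcal E}\bar w(e)$ and $d_{\max}$ is the maximum out-degree of a node in $\mathcal G$. A node is newly activated in round $t$ if it is activated in round $t$ and was not activated in any earlier round. *)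

From mathcomp Require Import all_boot.
From Stdlib Require Import Reals.
Set Implicit Arguments. Unset Strict Implicit. Unset Printing Implicit Defensive.

Open Scope R_scope.

(* p_max = maximum influence probability over arcs (0 if there are no arcs). *)
Definition pmax (V : finType) (E : rel V) (w : V -> V -> R) : R :=
  \big[Rmax/0%R]_(x : V * V | E x.1 x.2) w x.1 x.2.

Definition dmax (V : finType) (E : rel V) : nat :=
  (\max_(u : V) #|[set v | E u v]|)%N.

(* Current graph of a round: arcs into nodes of B (earlier intermediaries) removed. *)
Definition cur_graph (V : finType) (E : rel V) (B : {set V}) : rel V :=
  fun u v => E u v && (v \notin B).

(* Probability of a realization S of the independent-cascade coin flips
   (S = set of arcs whose coin flip succeeded) on graph E' with weights w. *)
Definition coin_weight (V : finType) (E' : rel V) (w : V -> V -> R)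
    (S : {set V * V}) : R :=
  \big[Rmult/1%R]_(x : V * V)
     (if E' x.1 x.2 then (if x \in S then w x.1 x.2 else 1 - w x.1 x.2)
      else (if x \in S then 0 else 1)).

Definition activated (V : finType) (S : {set V * V}) (s : V) : {set V} :=
  [set v | connect (fun a b => (a, b) \in S) s v].

(* Probability that, in a round whose current graph is cur_graph E B, with seed s
   and with the set A of nodes activated in earlier rounds, more than L nodes
   are newly activated. *)
Definition prob_new_exceeds (V : finType) (E : rel V) (w : V -> V -> R)
    (B A : {set V}) (s : V) (L : R) : R :=
  \big[Rplus/0%R]_(S : {set V * V} | (if Rlt_dec L (INR #|activated S s :\: A|) then true else false))
     coin_weight (cur_graph E B) w S.

(* Explore the cascade from its seed one node at a time.  Removing a frontier
   node f from the frontier adds its live out-arcs into unexplored nodes: at most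
   d of them, each live with probability at most p.  Choose z > 1 and dl > 0 with
   z (1 + p dl)^d <= 1 + dl, which is possible exactly when p d < 1.  Induction on
   the number of unexplored nodes then gives E[z^N_F] <= (1 + dl)^|F|, where N_F
   counts the nodes reached from the frontier F: exploring f costs a factor z and
   replaces f by its new children, contributing prod_v (1 + w(f,v) dl)
   <= (1 + p dl)^d.  To use the independence of the coins out of f from the rest,
   these coins are conditioned on one at a time, which turns their probabilities
   into 0 or 1.  The newly activated nodes are reached from the seed, so Markov's
   inequality for z^N gives P(N > L) <= (1 + dl) z^-L. *)

From HB Require Import structures.
From mathcomp Require Import all_boot.
From Stdlib Require Import Reals Lra.
Open Scope R_scope.
Set Implicit Arguments. Unset Strict Implicit. Unset Printing Implicit Defensive.

HB.instance Definition _ := Monoid.isComLaw.Build R 0 Rplus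
  (fun a b c => esym (Rplus_assoc a b c)) Rplus_comm Rplus_0_l.
HB.instance Definition _ := Monoid.isComLaw.Build R 1 Rmult
  (fun a b c => esym (Rmult_assoc a b c)) Rmult_comm Rmult_1_l.
HB.instance Definition _ := Monoid.isMulLaw.Build R 0 Rmult Rmult_0_l Rmult_0_r.
HB.instance Definition _ :=
  Monoid.isAddLaw.Build R Rmult Rplus Rmult_plus_distr_r Rmult_plus_distr_l.

Lemma bigsum_set_prod (X : finType) (g : X -> bool -> R) :
  \big[Rplus/0]_(S : {set X}) \big[Rmult/1]_(x : X) g x (x \in S) =
  \big[Rmult/1]_(x : X) (g x true + g x false).
Proof.
transitivity (\big[Rmult/1]_(x : X) \big[Rplus/0]_(b : bool) g x b); last first.
  by apply: eq_bigr => x _; rewrite big_bool.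
rewrite bigA_distr_bigA (reindex (fun f : {ffun X -> bool} => [set x | f x])).
  by apply: eq_bigr => f _; apply: eq_bigr => x _; rewrite inE.
exists (fun S : {set X} => [ffun x => x \in S]) => [f _ | S _].
  by apply/ffunP => x; rewrite ffunE inE.
by apply/setP => x; rewrite inE ffunE.
Qed.

Lemma ler_bigsum (I : finType) (P : pred I) (F1 F2 : I -> R) :
  (forall i, P i -> F1 i <= F2 i) ->
  \big[Rplus/0]_(i | P i) F1 i <= \big[Rplus/0]_(i | P i) F2 i.
Proof.
by move=> le_F; apply: (big_ind2 (fun a b => a <= b)) => // [|*]; [lra | apply: Rplus_le_compat].
Qed.

Lemma ler_bigprod (I : finType) (P : pred I) (F1 F2 : I -> R) :
  (forall i, P i -> 0 <= F1 i <= F2 i) ->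
  \big[Rmult/1]_(i | P i) F1 i <= \big[Rmult/1]_(i | P i) F2 i.
Proof.
move=> le_F.
suff [] : 0 <= \big[Rmult/1]_(i | P i) F1 i <= \big[Rmult/1]_(i | P i) F2 i by [].
apply: (big_ind2 (fun a b => 0 <= a <= b)) => //; first lra.
move=> a b c d [a_ge0 le_ab] [c_ge0 le_cd]; split; first exact: Rmult_le_pos.
exact: Rmult_le_compat.
Qed.

Lemma bigprod_const (I : finType) (A : {pred I}) (c : R) :
  \big[Rmult/1]_(i in A) c = c ^ #|A|.
Proof. by rewrite big_const; elim: #|A| => //= n ->. Qed.

Lemma connect_fwd_closed (T : finType) (e : rel T) (X : {pred T}) :
  (forall a b, e a b -> a \in X -> b \in X) ->
  forall x y, connect e x y -> x \in X -> y \in X.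
Proof.
move=> clX x _ /connectP [p + ->]; elim: p x => [|y p IHp] x //= /andP [exy py] Xx.
exact: IHp py (clX x y exy Xx).
Qed.

(* Setting [w a b] to 1 or 0 conditions on the coin of the arc (a, b). *)
Definition set_weight (V : eqType) (w : V -> V -> R) (a b : V) (r : R) : V -> V -> R :=
  fun x y => if (x == a) && (y == b) then r else w x y.

Lemma set_weight_at (V : eqType) (w : V -> V -> R) a b r : set_weight w a b r a b = r.
Proof. by rewrite /set_weight !eqxx. Qed.

Section CoinExpectation.
Variables (V : finType) (G : rel V).
Implicit Types (w : V -> V -> R) (S : {set V * V}) (H : {set V * V} -> R).

Definition prob_weights w := forall u v, G u v -> 0 <= w u v <= 1.

Definition coin_factor w S (x : V * V) : R :=
  if G x.1 x.2 then (if x \in S then w x.1 x.2 else 1 - w x.1 x.2)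
  else (if x \in S then 0 else 1).

Lemma coin_weight_bigD1 w S x :
  coin_weight G w S = coin_factor w S x * \big[Rmult/1]_(y | y != x) coin_factor w S y.
Proof. exact: bigD1. Qed.

Definition expect w H := \big[Rplus/0]_S (coin_weight G w S * H S).

Lemma coin_weight_ge0 w S : prob_weights w -> 0 <= coin_weight G w S.
Proof.
move=> w01; apply: big_ind => [||[a b] _]; [lra | exact: Rmult_le_pos |].
rewrite /coin_factor /=; case: ifP => Gab; case: ifP => _; try lra.
all: by have := w01 a b Gab; lra.
Qed.

Lemma sum_coin_weight w : \big[Rplus/0]_S coin_weight G w S = 1.
Proof.
rewrite /coin_weight (bigsum_set_prod (fun x b =>
  if G x.1 x.2 then (if b then w x.1 x.2 else 1 - w x.1 x.2) else (if b then 0 else 1))).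
by rewrite big1 // => x _; case: ifP => _; lra.
Qed.

Lemma coin_factor_set_weight w a b r S x : x != (a, b) ->
  coin_factor (set_weight w a b r) S x = coin_factor w S x.
Proof.
case: x => x y neq_xy; rewrite /coin_factor /set_weight /=.
suff -> : (x == a) && (y == b) = false by [].
by apply/negbTE; apply: contra neq_xy => /andP [/eqP -> /eqP ->].
Qed.

Lemma coin_weight_split w a b S :
  coin_weight G w S = w a b * coin_weight G (set_weight w a b 1) S
                    + (1 - w a b) * coin_weight G (set_weight w a b 0) S.
Proof.
have rest r : \big[Rmult/1]_(x | x != (a, b)) coin_factor (set_weight w a b r) S x
             = \big[Rmult/1]_(x | x != (a, b)) coin_factor w S x.
  by apply: eq_bigr => x; apply: coin_factor_set_weight.
rewrite !(coin_weight_bigD1 _ _ (a, b)) !rest /coin_factor /= !set_weight_at.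
by case: (G a b); case: ((a, b) \in S); ring.
Qed.

Lemma expect_split w a b H :
  expect w H = w a b * expect (set_weight w a b 1) H
             + (1 - w a b) * expect (set_weight w a b 0) H.
Proof.
rewrite /expect !big_distrr -big_split /=; apply: eq_bigr => S _.
by rewrite (coin_weight_split w a b S); ring.
Qed.

Lemma ler_expect w H1 H2 : prob_weights w ->
  (forall S, coin_weight G w S <> 0 -> H1 S <= H2 S) -> expect w H1 <= expect w H2.
Proof.
move=> w01 le_H; apply: ler_bigsum => S _.
have := coin_weight_ge0 S w01; case: (Req_dec (coin_weight G w S) 0) => [->|nz] ge0.
  lra.
by apply: Rmult_le_compat_l => //; apply: le_H.
Qed.

Lemma expect_cst w c : expect w (fun _ => c) = c.
Proof. by rewrite /expect -big_distrl /= sum_coin_weight Rmult_1_l. Qed.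

Lemma expectZ w c H : expect w (fun S => c * H S) = c * expect w H.
Proof. by rewrite /expect big_distrr /=; apply: eq_bigr => S _; ring. Qed.

Lemma coin_factor_neq0 w S : coin_weight G w S <> 0 -> forall x, coin_factor w S x <> 0.
Proof. by move=> nz x f0; apply: nz; rewrite (coin_weight_bigD1 _ _ x) f0 Rmult_0_l. Qed.

Lemma live_arc_in_graph w S a b : coin_weight G w S <> 0 -> (a, b) \in S -> G a b.
Proof.
move/coin_factor_neq0/(_ (a, b)); rewrite /coin_factor /=.
by case: (G a b) => //; case: ((a, b) \in S) => // + _; apply.
Qed.

Lemma live_of_weight1 w S a b :
  coin_weight G w S <> 0 -> G a b -> w a b = 1 -> (a, b) \in S.
Proof.
move/coin_factor_neq0/(_ (a, b)); rewrite /coin_factor /= => + Gab wab1.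
by rewrite Gab wab1; case: ((a, b) \in S) => //; rewrite Rminus_diag.
Qed.

Lemma dead_of_weight0 w S a b : coin_weight G w S <> 0 -> w a b = 0 -> (a, b) \notin S.
Proof.
move/coin_factor_neq0/(_ (a, b)); rewrite /coin_factor /= => + wab0; rewrite wab0.
by case: (G a b); case: ((a, b) \in S).
Qed.

End CoinExpectation.

Section Exploration.
Variable V : finType.
Implicit Types (U F : {set V}) (S : {set V * V}).

Definition live_step U S : rel V := fun a b => [&& (a, b) \in S, a \notin U & b \notin U].

Definition reached U S F : {set V} :=
  [set v | (v \notin U) && [exists u, [&& u \in F, u \notin U & connect (live_step U S) u v]]].

Definition live_out U S (f : V) : {set V} := [set v | ((f, v) \in S) && (v \notin f |: U)].

Lemma mem_reached U S F u v : u \in F -> u \notin U -> v \notin U ->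
  connect (live_step U S) u v -> v \in reached U S F.
Proof. by move=> Fu Uu Uv uv; rewrite inE Uv; apply/existsP; exists u; rewrite Fu Uu. Qed.

Lemma reached_explore U S F f : f \notin U ->
  reached U S F \subset f |: reached (f |: U) S ((F :\ f) :|: live_out U S f).
Proof.
move=> Uf; apply/subsetP => v; rewrite inE => /andP [Uv /existsP [u /and3P [Fu Uu uv]]].
set X := f |: _.
have connect_f a b : a \notin f |: U -> b \notin f |: U -> (a, b) \in S ->
    connect (live_step (f |: U) S) a b.
  by move=> fUa fUb ab; apply: connect1; rewrite /live_step ab fUa.
apply: connect_fwd_closed uv _ => [a b /and3P [ab Ua Ub] Xa|]; last first.
  have [-> | ne_uf] := eqVneq u f; first exact: setU11.
  by apply/setU1P; right; apply: (mem_reached (u := u)); rewrite ?inE ?negb_or ?ne_uf ?Fu.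
have [-> | ne_bf] := eqVneq b f; first exact: setU11.
have fUb : b \notin f |: U by rewrite !inE negb_or ne_bf.
apply/setU1P; right; have [ef | ne_af] := eqVneq a f.
  by subst a; apply: (mem_reached (u := b)); rewrite // in_setU [b \in live_out _ _ _]inE ab fUb orbT.
rewrite !inE (negbTE ne_af) /= in Xa; case/andP: Xa => fUa /existsP [u0 /and3P [F0 U0 u0a]].
apply: (mem_reached (u := u0)) => //; apply: connect_trans u0a (connect_f a b _ fUb ab).
by rewrite !inE negb_or ne_af.
Qed.

Lemma activated_sub_reached S s : activated S s \subset reached set0 S [set s].
Proof.
apply/subsetP => v; rewrite inE => sv; apply: (mem_reached (u := s)); rewrite ?inE //.
suff <- : connect (fun a b => (a, b) \in S) =2 connect (live_step set0 S) by [].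
by apply: eq_connect => a b; rewrite /live_step !inE andbT.
Qed.

End Exploration.

Section Derandomize.
Variables (V : finType) (G : rel V) (f : V) (N : {set V}).
Variables (feasible : (V -> V -> R) -> Prop) (H : {set V * V} -> R).
Variable bound : (V -> V -> R) -> R.
Hypothesis feasible_range : forall w t, feasible w -> t \in N -> 0 <= w f t <= 1.
Hypothesis feasible_set_weight : forall w t r,
  feasible w -> t \in N -> 0 <= r <= 1 -> feasible (set_weight w f t r).
Hypothesis bound_split : forall w t, t \in N ->
  bound w = w f t * bound (set_weight w f t 1) + (1 - w f t) * bound (set_weight w f t 0).
Hypothesis expect_le_bound_det : forall w, feasible w ->
  (forall t, t \in N -> w f t = 0 \/ w f t = 1) -> expect G w H <= bound w.

Lemma expect_le_bound w : feasible w -> expect G w H <= bound w.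
Proof.
suff: forall (s : seq V) w, feasible w -> {subset s <= N} ->
    (forall t, t \in N -> t \notin s -> w f t = 0 \/ w f t = 1) -> expect G w H <= bound w.
  by move=> /(_ (enum N) w) le_w feas_w; apply: le_w => // t; rewrite mem_enum => ->.
move=> {w}; elim=> [|t s IHs] w feas_w sN det.
  by apply: expect_le_bound_det => // t /det; apply.
have Nt : t \in N by apply: sN; exact: mem_head.
have IH r : r = 0 \/ r = 1 -> expect G (set_weight w f t r) H <= bound (set_weight w f t r).
  move=> r01; apply: IHs => [||v Nv sv].
  - by apply: feasible_set_weight => //; case: r01 => ->; lra.
  - by move=> v sv; apply: sN; rewrite inE sv orbT.
  rewrite /set_weight eqxx /=; case: eqP => [// | /eqP ne_vt].
  by apply: det; rewrite // inE negb_or ne_vt.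
have := feasible_range feas_w Nt; rewrite (expect_split _ _ f t) (bound_split _ Nt) => w01.
by apply: Rplus_le_compat; apply: Rmult_le_compat_l; try lra; apply: IH; [right | left].
Qed.

End Derandomize.

Definition is_one (r : R) : bool := if Req_EM_T r 1 then true else false.

Lemma is_oneP r : reflect (r = 1) (is_one r).
Proof. by rewrite /is_one; case: Req_EM_T => h; constructor. Qed.

Section ExplorationBound.
Variables (V : finType) (G : rel V) (p z dl : R).
Hypotheses (z_ge1 : 1 <= z) (dl_ge0 : 0 <= dl).
Implicit Types (U F : {set V}) (f : V) (w : V -> V -> R).

(* Arcs leaving explored nodes are never followed again, so their weights are
   left unconstrained; this is what lets [explore] condition on the coins out of f. *)
Definition out_bounded U w := forall u v, G u v -> u \notin U -> w u v <= p.

Definition admissible U w := prob_weights G w /\ out_bounded U w.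

Definition out_nbrs U f : {set V} := [set v | G f v & v \notin f |: U].

Definition out_factor U f w := \big[Rmult/1]_(v in out_nbrs U f) (1 + w f v * dl).

Definition reach_moment_bound U := forall F w, admissible U w ->
  expect G w (fun S => z ^ #|reached U S F|) <= (1 + dl) ^ #|F|.

Lemma admissible_setU1 U f w : admissible U w -> admissible (f |: U) w.
Proof.
by case=> w01 wp; split=> // u v Guv; rewrite !inE negb_or => /andP [_]; apply: wp.
Qed.

Lemma admissible_set_weight U f t r w : f \in U -> 0 <= r <= 1 ->
  admissible U w -> admissible U (set_weight w f t r).
Proof.
move=> Uf r01 [w01 wp]; split=> u v Guv; rewrite /set_weight; case: ifP => [|_].
- by [].
- exact: w01.
- by case/andP=> /eqP ->; rewrite Uf.
- exact: wp.
Qed.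

Lemma out_factor_split U f w t : t \in out_nbrs U f ->
  out_factor U f w = w f t * out_factor U f (set_weight w f t 1)
                   + (1 - w f t) * out_factor U f (set_weight w f t 0).
Proof.
have rest r : \big[Rmult/1]_(v in out_nbrs U f :\ t) (1 + set_weight w f t r f v * dl) =
               \big[Rmult/1]_(v in out_nbrs U f :\ t) (1 + w f v * dl).
  by apply: eq_bigr => v; rewrite !inE => /andP [ne_vt _]; rewrite /set_weight (negbTE ne_vt) andbF.
move=> Nt; rewrite /out_factor !(big_setD1 t Nt) !rest !set_weight_at /=; ring.
Qed.

(* Once the coins on the arcs out of f are deterministic, the set of new
   frontier nodes is almost surely the fixed set of targets of weight-1 arcs. *)
Lemma explore_det U F f w : f \notin U -> reach_moment_bound (f |: U) ->
  admissible (f |: U) w -> (forall v, v \in out_nbrs U f -> w f v = 0 \/ w f v = 1) ->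
  expect G w (fun S => z ^ #|reached U S F|) <= z * (1 + dl) ^ #|F :\ f| * out_factor U f w.
Proof.
move=> Uf IH adm_w det; have [w01 _] := adm_w.
pose K := [set v | [&& G f v, v \notin f |: U & is_one (w f v)]].
have live_outE S : coin_weight G w S <> 0 -> live_out U S f = K.
  move=> nzS; apply/setP => v; rewrite !inE; apply/andP/and3P => [[Sfv fUv] | [Gfv fUv /is_oneP w1]].
    have Gfv := live_arc_in_graph nzS Sfv.
    have Nv : v \in out_nbrs U f by rewrite !inE Gfv fUv.
    split=> //; apply/is_oneP; case: (det v Nv) => [w0 | //].
    by move: (dead_of_weight0 nzS w0); rewrite Sfv.
  by split=> //; apply: live_of_weight1 nzS Gfv w1.
have factorE : out_factor U f w = (1 + dl) ^ #|K|.
  rewrite /out_factor (bigID (fun v => is_one (w f v))) /= [X in _ * X]big1; last first.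
    move=> v /andP [Nv /is_oneP w1]; case: (det v Nv) => [-> | //]; ring.
  rewrite Rmult_1_r -bigprod_const; apply: eq_big => [v | v /andP [_ /is_oneP ->]].
    by rewrite !inE andbA.
  ring.
apply: Rle_trans (_ : _ <= expect G w (fun S => z * z ^ #|reached (f |: U) S (F :\ f :|: K)|)) _.
  apply: ler_expect => // S nzS; rewrite -(live_outE S nzS) tech_pow_Rmult.
  apply: Rle_pow => //; apply/leP.
  apply: leq_trans (subset_leq_card (reached_explore S F Uf)) _.
  by rewrite cardsU1; case: (_ \notin _).
rewrite expectZ factorE Rmult_assoc -pow_add; apply: Rmult_le_compat_l; first lra.
apply: Rle_trans (IH _ _ adm_w) _; apply: Rle_pow; first lra.
by apply/leP; rewrite cardsU leq_subr.
Qed.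

Lemma explore U F f w : f \notin U -> reach_moment_bound (f |: U) ->
  admissible (f |: U) w ->
  expect G w (fun S => z ^ #|reached U S F|) <= z * (1 + dl) ^ #|F :\ f| * out_factor U f w.
Proof.
move=> Uf IH.
apply: (expect_le_bound (f := f) (N := out_nbrs U f) (feasible := admissible (f |: U))
    (bound := fun w => z * (1 + dl) ^ #|F :\ f| * out_factor U f w))
  => [w' t [w01 _] | w' t r | w' t Nt |].
- by rewrite inE => /andP [Gft _]; apply: w01.
- by move=> adm_w' _ r01; apply: admissible_set_weight (setU11 f U) r01 adm_w'.
- by rewrite (out_factor_split _ Nt); ring.
- by move=> w'; apply: explore_det.
Qed.

Variable d : nat.
Hypotheses (p_ge0 : 0 <= p) (deg_le : forall u, (#|[set v | G u v]| <= d)%nat).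
Hypothesis z_step : z * (1 + p * dl) ^ d <= 1 + dl.

Lemma out_factor_le U f w : f \notin U -> admissible U w -> out_factor U f w <= (1 + p * dl) ^ d.
Proof.
move=> Uf [w01 wp]; apply: Rle_trans (_ : _ <= \big[Rmult/1]_(v in out_nbrs U f) (1 + p * dl)) _.
  apply: ler_bigprod => v; rewrite inE => /andP [Gfv _].
  by have := w01 f v Gfv; have := wp f v Gfv Uf; split; nra.
rewrite bigprod_const; apply: Rle_pow; first nra.
apply/leP; apply: leq_trans (deg_le f); apply: subset_leq_card; apply/subsetP => v.
by rewrite !inE => /andP [].
Qed.

Lemma expect_pow_reached U : reach_moment_bound U.
Proof.
have [n] := ubnP #|~: U|; elim: n U => // n IHn U ltU F w adm_w.
case: (pickP [pred f | (f \in F) && (f \notin U)]) => [f /andP [Ff Uf] | noF]; last first.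
  have reached0 S : reached U S F = set0.
    apply/setP => v; rewrite !inE; apply/negbTE/andP => -[_ /existsP [u /and3P [Fu Uu _]]].
    by have := noF u; rewrite /= Fu Uu.
  have -> : expect G w (fun S => z ^ #|reached U S F|) = expect G w (fun _ => 1).
    by apply: eq_bigr => S _; rewrite reached0 cards0.
  by rewrite expect_cst; apply: pow_R1_Rle; lra.
have IHf : reach_moment_bound (f |: U).
  apply: IHn; rewrite -ltnS (leq_trans _ ltU) // ltnS proper_card // properEneq setCS ?subsetUr //.
  by rewrite andbT; apply/eqP => /setP /(_ f); rewrite !inE eqxx Uf.
apply: Rle_trans (explore F Uf IHf (admissible_setU1 f adm_w)) _.
set X := (1 + dl) ^ #|F :\ f|.
have X_ge0 : 0 <= X by apply: pow_le; lra.
have : z * X * out_factor U f w <= z * X * (1 + p * dl) ^ d.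
  by apply: Rmult_le_compat_l; [nra | exact: out_factor_le].
have : X * (z * (1 + p * dl) ^ d) <= X * (1 + dl) by apply: Rmult_le_compat_l.
by rewrite (cardsD1 f F) Ff /= -/X; lra.
Qed.

End ExplorationBound.

Lemma pow1D_mul_1B_le1 (a : R) (d : nat) : 0 <= a -> (1 + a) ^ d * (1 - INR d * a) <= 1.
Proof.
move=> a_ge0; elim: d => [|d IHd]; first by rewrite /=; lra.
have pow_ge0 : 0 <= (1 + a) ^ d by apply: pow_le; lra.
have : 0 <= (1 + a) ^ d * (a * a * (INR d + 1)).
  by apply: Rmult_le_pos => //; apply: Rmult_le_pos; [nra | have := pos_INR d; lra].
rewrite S_INR /=; nra.
Qed.

(* With q = p d and dl = (1 - q) / 2, take z = (1 + dl) (1 - q dl). *)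
Lemma moment_parameters (p : R) (d : nat) : 0 <= p -> p * INR d < 1 ->
  exists z dl, 1 < z /\ 0 < dl /\ z * (1 + p * dl) ^ d <= 1 + dl.
Proof.
move=> p_ge0 q_lt1; have d_ge0 := pos_INR d; set q := p * INR d in q_lt1.
have q_ge0 : 0 <= q by apply: Rmult_le_pos.
pose dl := (1 - q) / 2; have dl_gt0 : 0 < dl by rewrite /dl; lra.
exists ((1 + dl) * (1 - q * dl)), dl; split; last split => //.
  have -> : (1 + dl) * (1 - q * dl) = 1 + dl * ((1 - q) * (1 - q / 2)) by rewrite /dl; field.
  suff : 0 < dl * ((1 - q) * (1 - q / 2)) by lra.
  by apply: Rmult_lt_0_compat => //; apply: Rmult_lt_0_compat; lra.
have := pow1D_mul_1B_le1 d (Rmult_le_pos _ _ p_ge0 (Rlt_le _ _ dl_gt0)).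
have -> : (1 + dl) * (1 - q * dl) * (1 + p * dl) ^ d =
          (1 + dl) * ((1 + p * dl) ^ d * (1 - INR d * (p * dl))) by rewrite /q; ring.
by move=> le1; rewrite -{2}(Rmult_1_r (1 + dl)); apply: Rmult_le_compat_l => //; lra.
Qed.

Lemma tail_le_expect_pow (V : finType) (G : rel V) (w : V -> V -> R)
    (N : {set V * V} -> nat) (z L : R) : prob_weights G w -> 1 < z ->
  \big[Rplus/0]_(S | if Rlt_dec L (INR (N S)) then true else false) coin_weight G w S
    <= exp (- ln z * L) * expect G w (fun S => z ^ N S).
Proof.
move=> w01 z_gt1; have ln_z_gt0 : 0 < ln z by rewrite -ln_1; apply: ln_increasing; lra.
rewrite -expectZ big_mkcond; apply: ler_bigsum => S _.
have weight_ge0 := coin_weight_ge0 S w01; have exp_gt0 := exp_pos (- ln z * L).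
case: (Rlt_dec L (INR (N S))) => [lt_LN | _] /=; last first.
  by apply: Rmult_le_pos => //; apply: Rmult_le_pos; [lra | apply: pow_le; lra].
rewrite -{1}(Rmult_1_r (coin_weight G w S)); apply: Rmult_le_compat_l => //.
rewrite -Rpower_pow; last lra.
rewrite /Rpower -exp_plus; apply: Rle_trans (exp_ineq1_le _); nra.
Qed.

Lemma Rmax_big_ub (I : eqType) (r : seq I) (P : pred I) (F : I -> R) x :
  x \in r -> P x -> F x <= \big[Rmax/0]_(i <- r | P i) F i.
Proof.
elim: r => // y r IHr; rewrite inE big_cons => /orP [/eqP <- Px | rx Px].
  by rewrite Px; apply: Rmax_l.
by case: (P y); [apply: Rle_trans (IHr rx Px) (Rmax_r _ _) | apply: IHr].
Qed.

Lemma pmax_ub (V : finType) (E : rel V) w u v : E u v -> w u v <= pmax E w.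
Proof. exact: (Rmax_big_ub (fun x : V * V => w x.1 x.2) (mem_index_enum (u, v))). Qed.

Lemma admissible_cur_graph (V : finType) (E : rel V) (B : {set V}) w p :
  (forall u v, E u v -> 0 <= w u v <= 1) -> pmax E w <= p ->
  admissible (cur_graph E B) p set0 w.
Proof.
move=> w01 le_p; split=> [u v /andP [Euv _] | u v /andP [Euv _] _]; first exact: w01.
exact: Rle_trans (pmax_ub w Euv) le_p.
Qed.

Lemma out_degree_cur_graph (V : finType) (E : rel V) (B : {set V}) u :
  (#|[set v | cur_graph E B u v]| <= dmax E)%nat.
Proof.
apply: leq_trans (@leq_bigmax _ (fun u => #|[set v | E u v]|) u); apply: subset_leq_card.
by apply/subsetP => v; rewrite !inE => /andP [].
Qed.

Theorem lemma3 :
  forall (p_max : R) (d_max : nat), p_max * INR d_max < 1 ->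
  exists Rc rho : R, 0 < Rc /\ 0 < rho /\
    forall (V : finType) (E : rel V) (w : V -> V -> R),
      (forall u v, E u v -> 0 <= w u v <= 1) ->
      pmax E w = p_max -> dmax E = d_max ->
      forall (B A : {set V}) (s : V) (L : R), 0 < L ->
        prob_new_exceeds E w B A s L <= Rc * exp (- rho * L).
Proof.
move=> p_max d_max q_lt1.
(* A negative [p_max] is never attained, but the constants must not depend on that. *)
pose p := Rmax 0 p_max.
have pd_lt1 : p * INR d_max < 1.
  by rewrite /p; case: (Rle_dec 0 p_max) => ?; [rewrite Rmax_right | rewrite Rmax_left; lra].
have [z [dl [z_gt1 [dl_gt0 z_step]]]] := moment_parameters (Rmax_l 0 p_max) pd_lt1.
exists (1 + dl), (ln z); split; first lra; split; first by rewrite -ln_1; apply: ln_increasing; lra.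
move=> V E w w01 pmaxE dmaxE B A s L _.
have adm : admissible (cur_graph E B) p set0 w.
  by apply: admissible_cur_graph; rewrite // pmaxE; apply: Rmax_r.
have deg u : (#|[set v | cur_graph E B u v]| <= d_max)%nat.
  by rewrite -dmaxE; apply: out_degree_cur_graph.
apply: Rle_trans (tail_le_expect_pow _ _ (proj1 adm) z_gt1) _; rewrite Rmult_comm.
apply: Rmult_le_compat_r; first exact: Rlt_le (exp_pos _).
have := expect_pow_reached (Rlt_le _ _ z_gt1) (Rlt_le _ _ dl_gt0) (Rmax_l 0 p_max) deg z_step
  [set s] adm.
rewrite cards1 /= Rmult_1_r; apply: Rle_trans; apply: ler_expect => [|S _]; first exact: (proj1 adm).
apply: Rle_pow; first lra; apply/leP.
exact: leq_trans (subset_leq_card (subsetDl _ _)) (subset_leq_card (activated_sub_reached S s)).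
Qed.
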